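(* For every graph $G$, $pw(G) \leq 2\, mw(G)$, where $pw(G)$ is the pathwidth and $mw(G)$ the matching width of $G$.
   Context: For a permutation $SV=(v_1,\dots,v_n)$ of $V(G)$ and $1\le i\le n$, let $V_i=\{v_1,\dots,v_i\}$ and let $G_i$ be the graph on $V(G)$ whose edges are the edges of $G$ with one end in $V_i$ and the other in $V(G)\setminus V_i$. The matching width of $SV$ is $\max_i \nu(G_i)$, where $\nu$ denotes maximum matching size, and the matching width $mw(G)$ is the minimum of this quantity over all permutations $SV$ of $V(G)$. Pathwidth is the standard notion. *)

From mathcomp Require Import all_boot.
From mathcomp Require Import boolp.

Set Implicit Arguments.
Unset Strict Implicit.
Unset Printing Implicit Defensive.

(* A finite simple graph: vertex set the finType T, adjacency e : rel T,
   assumed symmetric and irreflexive in the theorem. *)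

Definition is_path_decomposition (T : finType) (e : rel T) (bags : seq {set T}) : Prop :=
  [/\ (forall v : T, exists2 B, B \in bags & v \in B),
      (forall x y : T, e x y -> exists2 B, B \in bags & (x \in B) && (y \in B)) &
      (forall (v : T) (i j k : nat), i <= j <= k -> k < size bags ->
         v \in nth set0 bags i -> v \in nth set0 bags k -> v \in nth set0 bags j)].

Definition pd_width (T : finType) (bags : seq {set T}) : nat :=
  (\max_(B <- bags) #|B|).-1.

Definition has_pd_of_width (T : finType) (e : rel T) (k : nat) : bool :=
  `[< exists bags, is_path_decomposition e bags /\ pd_width bags <= k >].

Lemma has_pd_exists (T : finType) (e : rel T) : exists k, has_pd_of_width e k.
Proof.
exists (pd_width [:: [set: T]]); apply/asboolP; exists [:: [set: T]]; split => //.
split.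
- by move=> v; exists [set: T]; rewrite ?inE.
- by move=> x y _; exists [set: T]; rewrite ?inE.
- move=> v [|i] [|j] [|k] //= /andP[Hij Hjk] Hk; by [].
Qed.

Definition pathwidth (T : finType) (e : rel T) : nat := ex_minn (has_pd_exists e).

(* A matching of G_i, where V_i = elements of the prefix S: a set of pairs
   (x, y) with x in S, y not in S, x adjacent to y, such that no two distinct
   pairs share an endpoint. (Each edge of G_i is represented exactly once, oriented
   from V_i to its complement.) *)
Definition cut_matching (T : finType) (e : rel T) (S : seq T) (M : {set T * T}) : bool :=
  [forall p in M, (p.1 \in S) && (p.2 \notin S) && e p.1 p.2] &&
  [forall p in M, forall q in M, (p != q) ==>
     [&& p.1 != q.1, p.1 != q.2, p.2 != q.1 & p.2 != q.2]].

Definition cut_nu (T : finType) (e : rel T) (S : seq T) : nat :=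
  \max_(M : {set T * T} | cut_matching e S M) #|M|.

Definition order_mw (T : finType) (e : rel T) (s : seq T) : nat :=
  \max_(i < #|T|.+1) cut_nu e (take i s).

(* mw(G): minimum over all orderings (duplicate-free #|T|-tuples, i.e.
   permutations of V(G)).  The neutral element #|T| is an upper bound for every
   order_mw, and the index set is never empty. *)
Definition matching_width (T : finType) (e : rel T) : nat :=
  \big[minn/#|T|]_(s : #|T|.-tuple T | uniq s) order_mw e s.

(* Fix an ordering v_1, ..., v_n of the vertices and write V_c for {v_1, ..., v_c}.
   For every cut V_c we choose a maximal matching M_c of G_c: its endpoints
   V(M_c) meet every edge of G_c and number at most 2 nu(G_c).  The bag of v_c
   is {v_c} together with V(M_c), so its size is at most 2 mw + 1.
   The matchings are built one after another so that the bags containing a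
   vertex are consecutive: passing from V_c to V_(c+1), the pairs whose right end
   stays outside the cut are kept, the vertex whose partner v_(c+1) just entered
   the cut is rematched if possible, and the result is extended greedily to a
   maximal matching.  Hence a vertex outside the cut, once covered, stays covered
   until it enters, and a vertex inside the cut is never covered afresh.  An edge
   x y with x before y then lies in a common bag: either y is covered when x
   enters, or x is covered then and either stays covered until y enters or
   loses its partner at some cut in between, where y is already covered. *)

From mathcomp Require Import all_boot zify boolp.

Set Implicit Arguments.
Unset Strict Implicit.
Unset Printing Implicit Defensive.

Section CutMatchings.
Variables (T : finType) (e : rel T).
Implicit Types (S : seq T) (M N : {set T * T}) (p q : T * T).

Definition endpoints M : {set T} := [set p.1 | p in M] :|: [set p.2 | p in M].

Lemma endpointsP x M :
  reflect (exists2 p, p \in M & x = p.1 \/ x = p.2) (x \in endpoints M).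
Proof.
apply: (iffP setUP) => [[] /imsetP[p pM ->]|[p pM [->|->]]].
- by exists p; [|left].
- by exists p; [|right].
- by left; apply: imset_f.
- by right; apply: imset_f.
Qed.

Lemma endpoints1 p M : p \in M -> p.1 \in endpoints M.
Proof. by move=> pM; apply/endpointsP; exists p; [|left]. Qed.

Lemma endpoints2 p M : p \in M -> p.2 \in endpoints M.
Proof. by move=> pM; apply/endpointsP; exists p; [|right]. Qed.

Lemma endpointsS M N : M \subset N -> {subset endpoints M <= endpoints N}.
Proof.
by move=> /subsetP MN x /endpointsP[p /MN pN xp]; apply/endpointsP; exists p.
Qed.

Lemma card_endpoints M : #|endpoints M| <= 2 * #|M|.
Proof.
apply: leq_trans (leq_card_setU _ _) _.
by rewrite mul2n -addnn leq_add ?leq_imset_card.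
Qed.

Lemma cut_matchingP S M :
  reflect ((forall p, p \in M -> [/\ p.1 \in S, p.2 \notin S & e p.1 p.2]) /\
           (forall p q, p \in M -> q \in M -> p != q ->
              [/\ p.1 != q.1, p.1 != q.2, p.2 != q.1 & p.2 != q.2]))
          (cut_matching e S M).
Proof.
apply: (iffP andP) => [[/forall_inP edgeM /forall_inP disjM]|[edgeM disjM]].
  split=> [p /edgeM /andP[/andP[-> ->] ->] // | p q pM qM pq].
  by move: (disjM p pM) => /forall_inP/(_ q qM); rewrite pq => /and4P.
split; apply/forall_inP; first by move=> p /edgeM[-> -> ->].
move=> p pM; apply/forall_inP => q qM; apply/implyP => /(disjM p q pM qM).
by case=> -> -> -> ->.
Qed.

Section OneMatching.
Variables (S : seq T) (M : {set T * T}).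
Hypothesis cutM : cut_matching e S M.

Lemma cut_matching_edge p : p \in M -> [/\ p.1 \in S, p.2 \notin S & e p.1 p.2].
Proof. by case/cut_matchingP: cutM => edgeM _; apply: edgeM. Qed.

Lemma cut_matching_disjoint p q : p \in M -> q \in M -> p != q ->
  [/\ p.1 != q.1, p.1 != q.2, p.2 != q.1 & p.2 != q.2].
Proof. by case/cut_matchingP: cutM => _; apply. Qed.

Lemma cut_matching_inj2 p q : p \in M -> q \in M -> p.2 = q.2 -> p = q.
Proof.
move=> pM qM pq2; apply/eqP/negPn/negP => /(cut_matching_disjoint pM qM).
by rewrite pq2 eqxx => -[].
Qed.

Lemma endpoints_in_cut x : x \in S -> x \in endpoints M ->
  exists2 p, p \in M & p.1 = x.
Proof.
move=> xS /endpointsP[p pM [xp|xp]]; first by exists p.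
by have [_ + _] := cut_matching_edge pM; rewrite -xp xS.
Qed.

Lemma endpoints_out_cut y : y \notin S -> y \in endpoints M ->
  exists2 p, p \in M & p.2 = y.
Proof.
move=> yS /endpointsP[p pM [yp|yp]]; last by exists p.
by have [+ _ _] := cut_matching_edge pM; rewrite -yp (negbTE yS).
Qed.

Lemma cut_matching_add a b : a \in S -> b \notin S -> e a b ->
  a \notin endpoints M -> b \notin endpoints M -> cut_matching e S ((a, b) |: M).
Proof.
move=> aS bS ab aM bM.
have fresh q : q \in M -> [/\ a != q.1, a != q.2, b != q.1 & b != q.2].
  move=> qM; have q1 := endpoints1 qM; have q2 := endpoints2 qM.
  by split; [move: aM | move: aM | move: bM | move: bM]; apply: contraNneq => ->.
apply/cut_matchingP; split=> [p /setU1P[-> //|/cut_matching_edge //] | p q].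
case/setU1P=> [->|pM] /setU1P[->|qM]; rewrite ?eqxx //.
- by move=> _; apply: fresh.
- by move=> _; case: (fresh p pM) => ? ? ? ?; split; rewrite eq_sym.
- exact: cut_matching_disjoint.
Qed.

Lemma cut_matching_fresh N p : N \subset M -> p \in M -> p \notin N ->
  p.1 \notin endpoints N /\ p.2 \notin endpoints N.
Proof.
move=> /subsetP NM pM pN.
suff fresh x : x = p.1 \/ x = p.2 -> x \notin endpoints N.
  by split; apply: fresh; [left|right].
move=> xp; apply/endpointsP => -[q qN xq].
have pq : p != q by apply: contraNneq pN => ->.
have [] := cut_matching_disjoint pM (NM q qN) pq.
by case: xp xq => -> [] ->; rewrite eqxx.
Qed.

End OneMatching.

Definition covers_cut S M : Prop :=
  forall a b, a \in S -> b \notin S -> e a b ->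
  (a \in endpoints M) || (b \in endpoints M).

Lemma cut_matching_extend S M : cut_matching e S M ->
  exists N, [/\ cut_matching e S N, M \subset N & covers_cut S N].
Proof.
move=> cutM; pose P N := cut_matching e S N && (M \subset N).
have PM : P M by rewrite /P cutM subxx.
case: (arg_maxnP (fun N => #|N|) PM) => N /andP[cutN MN] maxN.
exists N; split=> // a b aS bS ab; apply/negPn/negP; rewrite negb_or.
case/andP=> aN bN; have abN : (a, b) \notin N by apply: contra aN => /endpoints1.
have /maxN : P ((a, b) |: N).
  by rewrite /P cut_matching_add // (subset_trans MN) ?subsetUr.
by rewrite cardsU1 abN /= add1n ltnn.
Qed.

Lemma cut_matching_widen S S' M : {subset S <= S'} -> cut_matching e S M ->
  cut_matching e S' [set p in M | p.2 \notin S'].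
Proof.
move=> SS' cutM; apply/cut_matchingP; split=> [p|p q]; rewrite !inE.
  by case/andP=> /(cut_matching_edge cutM)[/SS' ? _ ?] ?.
by move=> /andP[pM _] /andP[qM _]; exact: (cut_matching_disjoint cutM).
Qed.

Lemma cut_matching_augment S M u : cut_matching e S M -> u \in S ->
    u \notin endpoints M ->
  exists N, [/\ cut_matching e S N, M \subset N,
    {in S, forall x, x \in endpoints N -> x = u \/ x \in endpoints M} &
    u \in endpoints N \/ forall y, y \notin S -> e u y -> y \in endpoints M].
Proof.
move=> cutM uS uM.
case: (pickP [pred y | [&& y \notin S, e u y & y \notin endpoints M]]) => [y|none].
  case/and3P=> yS uy yM; exists ((u, y) |: M); split.
  - exact: cut_matching_add.
  - exact: subsetUr.
  - move=> x xS /endpointsP[q /setU1P[->|qM] [|] xq]; subst x.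
    + by left.
    + by move: xS => /=; rewrite (negbTE yS).
    + by right; apply: endpoints1.
    + by right; apply: endpoints2.
  - by left; apply: (endpoints1 (p := (u, y))); rewrite setU11.
exists M; split=> [//||x _ xM|]; [exact: subxx | by right | right=> y yS uy].
by apply/negPn; move: (none y); rewrite /= yS uy => /negbT.
Qed.

End CutMatchings.

Lemma card_cut_matching_le_order_mw (T : finType) (e : rel T) (s : seq T) c M :
  c <= #|T| -> cut_matching e (take c s) M -> #|M| <= order_mw e s.
Proof.
rewrite -ltnS => cT cutM.
apply: leq_trans (leq_bigmax_cond (F := fun N : {set T * T} => #|N|) _ cutM) _.
exact: (leq_bigmax (F := fun i : 'I_#|T|.+1 => cut_nu e (take i s)) (Ordinal cT)).
Qed.

Lemma last_before_switch (P : pred nat) a b : a <= b -> P a -> ~~ P b ->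
  exists c, [/\ a <= c < b, P c & ~~ P c.+1].
Proof.
elim: b => [|b IHb]; first by rewrite leqn0 => /eqP -> ->.
rewrite leq_eqVlt ltnS => /orP[/eqP -> -> // | ab] Pa Pb.
case: (boolP (P b)) => [Pb'|/(IHb ab Pa)[c [/andP[ac cb] Pc Pc1]]].
  by exists b; rewrite ab ltnSn.
by exists c; rewrite ac ltnW.
Qed.

Section VertexOrdering.
Variables (T : finType) (e : rel T) (s : seq T).
Hypotheses (s_uniq : uniq s) (s_size : size s = #|T|).
Implicit Types (M N : {set T * T}) (p : T * T).

Lemma mem_ordering x : x \in s.
Proof.
have sT : #|s| = #|T| by rewrite (card_uniqP s_uniq).
by rewrite ((subset_cardP sT) (subset_predT _)).
Qed.

Lemma mem_take_index x c : (x \in take c s) = (index x s < c).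
Proof. exact: in_take (mem_ordering x). Qed.

Lemma index_ordering_inj : injective (index^~ s).
Proof.
by move=> x y xy; rewrite -(nth_index x (mem_ordering x)) xy nth_index ?mem_ordering.
Qed.

Lemma mem_take_succ c : {subset take c s <= take c.+1 s}.
Proof. by move=> x; rewrite !mem_take_index => /ltnW. Qed.

Lemma entering_unique c x y : x \notin take c s -> x \in take c.+1 s ->
  y \notin take c s -> y \in take c.+1 s -> x = y.
Proof. by rewrite !mem_take_index => *; apply: index_ordering_inj; lia. Qed.

Definition maximal_at c M := cut_matching e (take c s) M /\ covers_cut e (take c s) M.

Definition successor c M N : Prop :=
  [/\ maximal_at c.+1 N,
      {in M, forall p, p.2 \notin take c.+1 s -> p \in N},
      {in take c s, forall x, x \in endpoints N -> x \in endpoints M} &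
      {in M, forall p, p.2 \in take c.+1 s -> p.1 \notin endpoints N ->
         forall y, y \notin take c.+1 s -> e p.1 y -> y \in endpoints M}].

Lemma rematch_entering c M : cut_matching e (take c s) M ->
  exists M1, [/\ cut_matching e (take c.+1 s) M1,
    [set p in M | p.2 \notin take c.+1 s] \subset M1,
    {in take c s, forall x, x \in endpoints M1 -> x \in endpoints M} &
    {in M, forall p, p.2 \in take c.+1 s -> p.1 \in endpoints M1 \/
       forall y, y \notin take c.+1 s -> e p.1 y -> y \in endpoints M}].
Proof.
move=> cutM; set S' := take c.+1 s; set M' := [set p in M | p.2 \notin S'].
have M'subM : M' \subset M by apply/subsetP => p; rewrite inE => /andP[].
have cutM' : cut_matching e S' M' := cut_matching_widen (@mem_take_succ c) cutM.
have M'M : {subset endpoints M' <= endpoints M} := endpointsS M'subM.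
case: (pickP [pred p in M | p.2 \in S']) => [p0 /andP[p0M p0S'] | none]; last first.
  exists M'; split=> // [x _ /M'M // | p pM pS'].
  by move: (none p); rewrite /= pM pS'.
have [p01 p02 _] := cut_matching_edge cutM p0M.
have p0nM' : p0 \notin M' by rewrite inE p0S' andbF.
have [p0M' _] := cut_matching_fresh cutM M'subM p0M p0nM'.
have [M1 [cutM1 M'M1 M1left M1p0]] :=
  cut_matching_augment cutM' (mem_take_succ p01) p0M'.
exists M1; split=> // [x xc /(M1left x (mem_take_succ xc))[->|/M'M //] | p pM pS'].
  exact: endpoints1.
have [_ p2 _] := cut_matching_edge cutM pM.
have <- : p0 = p := cut_matching_inj2 cutM p0M pM (entering_unique p02 p0S' p2 pS').
by case: M1p0 => [|p0M'y]; [left | right=> y yS p0y; apply/M'M/p0M'y].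
Qed.

Lemma successor_exists c M : maximal_at c M -> exists N, successor c M N.
Proof.
case=> cutM covM; have [M1 [cutM1 M'M1 M1left M1entering]] := rematch_entering cutM.
have [N [cutN M1N covN]] := cut_matching_extend cutM1.
exists N; split=> //.
- by move=> p pM pS'; apply/(subsetP M1N)/(subsetP M'M1); rewrite inE pM.
- move=> x xc /(endpoints_in_cut cutN (mem_take_succ xc))[q qN qx].
  case: (boolP (q \in M1)) => qM1; first by apply: M1left xc _; rewrite -qx endpoints1.
  have [_ q2M1] := cut_matching_fresh cutN M1N qN qM1.
  have [_ q2S' xq2] := cut_matching_edge cutN qN; rewrite qx in xq2.
  have q2c : q.2 \notin take c s := contra (@mem_take_succ c _) q2S'.
  case/orP: (covM x q.2 xc q2c xq2) => // /(endpoints_out_cut cutM q2c).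
  case=> r rM rq; case/negP: q2M1; rewrite -rq; apply/endpoints2/(subsetP M'M1).
  by rewrite inE rM rq q2S'.
- move=> p pM pS' pN y yS py.
  by case: (M1entering p pM pS') => [/(endpointsS M1N)|]; [rewrite (negbTE pN) | apply].
Qed.

Definition next_matching c M : {set T * T} :=
  if [pick N | `[< successor c M N >]] is Some N then N else set0.

Fixpoint matching_at c : {set T * T} :=
  if c is c'.+1 then next_matching c' (matching_at c') else set0.

Lemma next_matchingP c M : maximal_at c M -> successor c M (next_matching c M).
Proof.
move=> maxM; rewrite /next_matching; case: pickP => [N /asboolP // | none].
by have [N /asboolT] := successor_exists maxM; rewrite none.
Qed.

Lemma matching_at_maximal c : maximal_at c (matching_at c).
Proof.
elim: c => [|c IHc]; last by case: (next_matchingP IHc).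
split=> [|a b]; last by rewrite take0.
by apply/cut_matchingP; split=> p; rewrite inE.
Qed.

Lemma matching_at_succ c : successor c (matching_at c) (matching_at c.+1).
Proof. exact: next_matchingP (matching_at_maximal c). Qed.

Local Notation covered c x := (x \in endpoints (matching_at c)).

Lemma covered_right_persist c d y : c <= d -> y \notin take d s ->
  covered c y -> covered d y.
Proof.
elim: d => [|d IHd]; first by rewrite leqn0 => /eqP ->.
rewrite leq_eqVlt ltnS => /orP[/eqP -> // | cd] yd1.
have yd : y \notin take d s := contra (@mem_take_succ d _) yd1.
move=> /(IHd cd yd); have [cutd _] := matching_at_maximal d.
case/(endpoints_out_cut cutd yd) => r rd ry; rewrite -ry in yd1 *.
by have [_ persist _ _] := matching_at_succ d; apply/endpoints2/persist.
Qed.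

Lemma covered_left_shrink c d x : c <= d -> x \in take c s ->
  covered d x -> covered c x.
Proof.
elim: d => [|d IHd]; first by rewrite leqn0 => /eqP ->.
rewrite leq_eqVlt ltnS => /orP[/eqP -> // | cd] xc xd1.
have xd : x \in take d s by move: xc; rewrite !mem_take_index => /leq_trans; apply.
by have [_ _ shrink _] := matching_at_succ d; apply: IHd cd xc (shrink x xd xd1).
Qed.

Definition bag_of v : {set T} := v |: endpoints (matching_at (index v s).+1).

Definition bags : seq {set T} := map bag_of s.

Lemma mem_nth_bags v i : i < size s ->
  (v \in nth set0 bags i) = (index v s == i) || covered i.+1 v.
Proof.
move=> ltis; rewrite (nth_map v) // /bag_of index_uniq // !inE.
congr (_ || _); apply/eqP/eqP => [->|<-]; first by rewrite index_uniq.
by rewrite nth_index ?mem_ordering.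
Qed.

Lemma common_bag i x y : i < size s ->
  x \in nth set0 bags i -> y \in nth set0 bags i ->
  exists2 B, B \in bags & (x \in B) && (y \in B).
Proof.
move=> ltis xi yi; exists (nth set0 bags i); last by rewrite xi yi.
by rewrite mem_nth ?size_map.
Qed.

Lemma common_bag_covered c x y : 0 < c <= size s -> covered c x -> covered c y ->
  exists2 B, B \in bags & (x \in B) && (y \in B).
Proof.
case: c => // c /= lecs xc yc.
by apply: (common_bag lecs); rewrite mem_nth_bags // ?xc ?yc orbT.
Qed.

Lemma card_bag_of v : #|bag_of v| <= (2 * order_mw e s).+1.
Proof.
rewrite /bag_of cardsU1 -add1n; apply: leq_add (leq_b1 _) _.
apply: leq_trans (card_endpoints _) _; rewrite leq_mul2l; apply/orP; right.
have [cutv _] := matching_at_maximal (index v s).+1.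
by apply: card_cut_matching_le_order_mw cutv; rewrite -s_size index_mem mem_ordering.
Qed.

Lemma common_bag_entering x y : index x s < index y s ->
  covered (index y s) x -> exists2 B, B \in bags & (x \in B) && (y \in B).
Proof.
set k := index y s => ik xk.
have ks : k < size s by rewrite index_mem mem_ordering.
have xk_in : x \in take k s by rewrite mem_take_index.
have [cutk _] := matching_at_maximal k.
have [r rk rx] := endpoints_in_cut cutk xk_in xk.
have [_ r2k _] := cut_matching_edge cutk rk.
case: (eqVneq r.2 y) => [ry|ny].
  apply: (common_bag_covered (c := k)) xk _.
    by rewrite (leq_ltn_trans (leq0n _) ik) ltnW.
  by rewrite -ry; apply: endpoints2.
have [_ persist _ _] := matching_at_succ k.
have r2k1 : r.2 \notin take k.+1 s.
  apply: contra ny => r2k1; apply/eqP; apply: entering_unique r2k r2k1 _ _;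
    by rewrite mem_take_index ?ltnn.
apply: (common_bag ks); rewrite mem_nth_bags //; last by rewrite -/k eqxx.
by rewrite -rx endpoints1 ?orbT // persist.
Qed.

Lemma edge_in_common_bag x y : e x y -> index x s < index y s ->
  exists2 B, B \in bags & (x \in B) && (y \in B).
Proof.
set i := index x s; set k := index y s => xy ik.
have ks : k < size s by rewrite index_mem mem_ordering.
case: (boolP (covered i.+1 y)) => yi.
  have is_ : i < size s by apply: ltn_trans ks.
  by apply: (common_bag is_); rewrite mem_nth_bags // -/i ?eqxx ?yi ?orbT.
have xi : covered i.+1 x.
  have [_ covi] := matching_at_maximal i.+1.
  have xi1 : x \in take i.+1 s by rewrite mem_take_index.
  have yi1 : y \notin take i.+1 s by rewrite mem_take_index -leqNgt.
  by move: (covi x y xi1 yi1 xy); rewrite (negbTE yi) orbF.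
have [xk | xk] := boolP (covered k x); first exact: common_bag_entering.
have [c [/andP[ic ck] xc xc1]] :=
  last_before_switch (P := fun c => covered c x) ik xi xk.
have [cutc _] := matching_at_maximal c.
have xc_in : x \in take c s by rewrite mem_take_index.
have [r rc rx] := endpoints_in_cut cutc xc_in xc.
have [_ persist _ entering] := matching_at_succ c.
have r2c1 : r.2 \in take c.+1 s.
  apply/negPn/negP => /(persist r rc) rc1.
  by case/negP: xc1; rewrite -rx; apply: endpoints1.
have yc1 : y \notin take c.+1 s by rewrite mem_take_index -leqNgt.
have yc : covered c y by apply: (entering r rc r2c1) yc1 _; rewrite rx.
apply: (common_bag_covered (c := c)) => //.
by rewrite (leq_trans (ltn0Sn i) ic) ltnW // (ltn_trans ck ks).
Qed.

Lemma bags_interval v i j k : i <= j <= k -> k < size bags ->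
  v \in nth set0 bags i -> v \in nth set0 bags k -> v \in nth set0 bags j.
Proof.
rewrite size_map => /andP[ij jk] ks; rewrite !mem_nth_bags; try lia.
case: (ltngtP j (index v s)) => [jv|vj|_]; rewrite ?orFb ?orTb //.
  move=> /orP[/eqP vi|vi1] _; first lia.
  by apply: (covered_right_persist _ _ vi1); rewrite ?mem_take_index -?leqNgt //; lia.
move=> _ /orP[/eqP vk|vk1]; first lia.
by apply: (covered_left_shrink _ _ vk1); rewrite ?mem_take_index //; lia.
Qed.

Lemma bags_path_decomposition : symmetric e -> is_path_decomposition e bags.
Proof.
have own_bag v : exists2 B, B \in bags & (v \in B) && (v \in B).
  by exists (bag_of v); rewrite ?map_f ?mem_ordering // setU11.
move=> e_sym; split=> [v | x y xy | ]; last exact: bags_interval.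
  by have [B ? /andP[]] := own_bag v; exists B.
case: (ltngtP (index x s) (index y s)) => [xy_|yx|/index_ordering_inj <-] //.
  exact: edge_in_common_bag.
rewrite e_sym in xy; have [B Bbags /andP[yB xB]] := edge_in_common_bag xy yx.
by exists B; rewrite ?xB ?yB.
Qed.

Lemma bags_width : pd_width bags <= 2 * order_mw e s.
Proof.
have : \max_(B <- bags) #|B| <= (2 * order_mw e s).+1.
  by apply/bigmax_leqP_seq => B /mapP[v _ ->] _; apply: card_bag_of.
rewrite /pd_width; lia.
Qed.

End VertexOrdering.

Lemma pathwidth_le_width (T : finType) (e : rel T) (bags : seq {set T}) :
  is_path_decomposition e bags -> pathwidth e <= pd_width bags.
Proof.
move=> pd; rewrite /pathwidth; case: ex_minnP => m _; apply.
by apply/asboolP; exists bags.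
Qed.

Lemma pathwidth_le_card (T : finType) (e : rel T) : pathwidth e <= #|T|.-1.
Proof.
have pd : is_path_decomposition e [:: [set: T]].
  split=> [v | x y _ | v i j k /andP[_ jk] k0 _ _]; try by exists [set: T]; rewrite ?inE.
  by have -> : j = 0 by move: k0 => /=; lia.
by apply: leq_trans (pathwidth_le_width pd) _; rewrite /pd_width big_seq1 cardsT.
Qed.

Lemma pathwidth_le_order_mw (T : finType) (e : rel T) (s : seq T) :
  symmetric e -> uniq s -> size s = #|T| -> pathwidth e <= 2 * order_mw e s.
Proof.
move=> e_sym s_uniq s_size.
apply: leq_trans (pathwidth_le_width (bags_path_decomposition s_uniq s_size e_sym)) _.
exact: bags_width.
Qed.

Theorem theorem7 (T : finType) (e : rel T) :
  symmetric e -> irreflexive e ->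
  pathwidth e <= 2 * matching_width e.
Proof.
move=> e_sym _; apply: (big_ind (fun m => pathwidth e <= 2 * m)).
- by apply: leq_trans (pathwidth_le_card e) _; lia.
- by move=> a b; lia.
- by move=> s s_uniq; apply: pathwidth_le_order_mw; rewrite ?size_tuple.
Qed.
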